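(* Let $(V,\mathcal H,\iota,W)$ be an abelian functional theory with set of weights $\Omega$ and let $\rho\in\mathrm{conv}(\Omega)$. Then $\rho$ is a critical value of the smooth map $\iota^*|_{\mathcal P}:\mathcal P\to\mathrm{aff}(\Omega)$ if and only if $\rho$ lies in the convex hull of some $\dim\mathrm{conv}(\Omega)$ $(=\dim V-\dim\iota^{-1}(\mathrm{span}\{\mathbb 1\}))$ weights.
   Context: A generalized functional theory is a tuple $(V,\mathcal H,\iota,W)$ with $V$ a finite-dimensional real vector space, $\mathcal H$ a finite-dimensional complex Hilbert space, $\iota:V\to i\mathfrak u(\mathcal H)$ linear into the Hermitian operators, $W$ Hermitian; it is abelian if all $\iota(v)$ commute. States are regarded as linear functionals on $i\mathfrak u(\mathcal H)$ via the trace and $\iota^*$ is the dual map; $\mathcal P$, the set of pure states, is a smooth manifold (projective space). A weight is $\alpha\in V^*$ such that some nonzero $\psi$ satisfies $\iota(v)\psi=\langle\alpha,v\rangle\psi$ for all $v$; $\Omega$ is the set of weights, and $\iota^*(\mathcal P)=\mathrm{conv}(\Omega)$. A point is a critical value of a smooth map if it is not a regular value, i.e. the derivative fails to be surjective at some point of its preimage. *)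

From HB Require Import structures.
From mathcomp Require Import all_boot all_order all_algebra.
From mathcomp Require Import reals complex.
Set Implicit Arguments. Unset Strict Implicit. Unset Printing Implicit Defensive.
Import Order.TTheory GRing.Theory Num.Theory.
Local Open Scope ring_scope.
Local Open Scope complex_scope.

Section GFT.
Variables (R : realType) (n d : nat).
Local Notation C := R[i].

Definition adjmx (p q : nat) (M : 'M[C]_(p, q)) : 'M[C]_(q, p) :=
  (map_mx (@conjc R) M)^T.

Definition herm_op (M : 'M[C]_n) : Prop := adjmx M = M.

Definition inner (x y : 'cV[C]_n) : C := (adjmx x *m y) 0 0.

(* V = R^d (coordinates w.r.t. a basis); iota is the linear map with
   iota (e_k) = A k; V^* is identified with 'rV[R]_d via the pairing below. *)
Definition iota (A : 'I_d -> 'M[C]_n) (v : 'rV[R]_d) : 'M[C]_n :=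
  \sum_(k < d) (v 0 k)%:C *: A k.

Definition pairing (a v : 'rV[R]_d) : R := \sum_(k < d) a 0 k * v 0 k.

Definition abelian_theory (A : 'I_d -> 'M[C]_n) : Prop :=
  forall v w : 'rV[R]_d, iota A v *m iota A w = iota A w *m iota A v.

Definition weight (A : 'I_d -> 'M[C]_n) (a : 'rV[R]_d) : Prop :=
  exists psi : 'cV[C]_n, psi != 0 /\
    forall v : 'rV[R]_d, iota A v *m psi = (pairing a v)%:C *: psi.

Definition in_conv (S : 'rV[R]_d -> Prop) (rho : 'rV[R]_d) : Prop :=
  exists m (w : 'I_m -> 'rV[R]_d) (l : 'I_m -> R),
    (forall i, S (w i)) /\ (forall i, 0 <= l i) /\ \sum_(i < m) l i = 1 /\
    rho = \sum_(i < m) l i *: w i.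

(* the linear space parallel to aff(Omega): span of differences of weights *)
Definition aff_dir (A : 'I_d -> 'M[C]_n) (w : 'rV[R]_d) : Prop :=
  exists m (a b : 'I_m -> 'rV[R]_d) (c : 'I_m -> R),
    (forall i, weight A (a i)) /\ (forall i, weight A (b i)) /\
    w = \sum_(i < m) c i *: (a i - b i).

Definition diff_family (A : 'I_d -> 'M[C]_n) m (D : 'M[R]_(m, d)) : Prop :=
  forall i, exists a b, weight A a /\ weight A b /\ row i D = a - b.

(* dim conv(Omega) = dim aff(Omega) = dim of the span of differences *)
Definition conv_dim (A : 'I_d -> 'M[C]_n) (r : nat) : Prop :=
  (exists m (D : 'M[R]_(m, d)), diff_family A D /\ \rank D = r) /\
  (forall m (D : 'M[R]_(m, d)), diff_family A D -> (\rank D <= r)%N).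

(* iota^* restricted to pure states, on unit representatives psi of [psi] in P:
   <iota^*(|psi><psi|), e_k> = tr(|psi><psi| A_k) = <psi, A_k psi>. *)
Definition istar (A : 'I_d -> 'M[C]_n) (psi : 'cV[C]_n) : 'rV[R]_d :=
  \row_k complex.Re (inner psi (A k *m psi)).

(* its differential at psi in the direction phi (the map psi |-> <psi,A_k psi>
   is a real quadratic form on C^n = R^(2n); this is its derivative) *)
Definition distar (A : 'I_d -> 'M[C]_n) (psi phi : 'cV[C]_n) : 'rV[R]_d :=
  \row_k complex.Re (inner phi (A k *m psi) + inner psi (A k *m phi)).

(* rho is a critical value of iota^*|_P : P -> aff(Omega): at some pure state
   [psi] (psi a unit vector) in the preimage, the differential is not onto the
   tangent space of aff(Omega).  The tangent space of P at [psi] is the image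
   of T_psi S(H) = {phi | Re <psi,phi> = 0} under the submersion S(H) -> P. *)
Definition critical_value (A : 'I_d -> 'M[C]_n) (rho : 'rV[R]_d) : Prop :=
  exists psi : 'cV[C]_n, inner psi psi = 1 /\ istar A psi = rho /\
    exists w, aff_dir A w /\
      forall phi : 'cV[C]_n, complex.Re (inner psi phi) = 0 -> distar A psi phi <> w.

End GFT.

(* Commuting Hermitian operators have a common orthonormal eigenbasis: P A_k P^* is
   diagonal and real, and the rows lam_i of eigenvalues are exactly the weights.  In the
   coordinates c = P psi one gets iota^*(psi) = sum_i |c_i|^2 lam_i, and a tangent vector
   with coordinates b contributes 2 Re (conj c_i b_i) to the coefficient of lam_i, so the
   differential at psi maps onto the span of the differences of the lam_i with c_i <> 0.
   Hence rho is a critical value iff it is a convex combination of weights whose affine span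
   has dimension less than r = dim conv(Omega).  By Caratheodory such a combination needs at
   most r weights, which can be padded to r distinct ones; conversely the affine span of r
   weights has dimension at most r - 1. *)

From Pilot Require Import Defs.
From mathcomp Require Import all_boot all_order all_algebra.
From mathcomp Require Import reals complex.
From mathcomp Require Import spectral.
From mathcomp Require Import ring lra.
Set Implicit Arguments. Unset Strict Implicit. Unset Printing Implicit Defensive.
Import Order.TTheory GRing.Theory Num.Theory.
Local Open Scope ring_scope.
Local Open Scope complex_scope.

Section ComplexScalars.
Variable R : rcfType.
Implicit Types (x y : R[i]) (a : R).

Lemma ReD x y : complex.Re (x + y) = complex.Re x + complex.Re y.
Proof. by case: x; case: y. Qed.

Lemma Re_sum I (s : seq I) (P : pred I) (F : I -> R[i]) :
  complex.Re (\sum_(i <- s | P i) F i) = \sum_(i <- s | P i) complex.Re (F i).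
Proof. exact: (big_morph _ ReD (erefl : complex.Re 0 = 0 :> R)). Qed.

Lemma Re_realM a x : complex.Re (a%:C * x) = a * complex.Re x.
Proof. by case: x => b c /=; rewrite mul0r subr0. Qed.

Lemma ReJ_mulC x y : complex.Re (x^* * y) = complex.Re (y^* * x).
Proof. by case: x => a b; case: y => c e /=; lra. Qed.

Lemma ReJ_mul_ge0 x : 0 <= complex.Re (x^* * x).
Proof. by case: x => a b /=; nra. Qed.

Lemma ReJ_mul_eq0 x : (complex.Re (x^* * x) == 0) = (x == 0).
Proof.
apply/eqP/eqP => [|->]; last by rewrite mulr0.
by case: x => a b /= h; apply/eqP; rewrite eq_complex /=; apply/andP; split; apply/eqP; nra.
Qed.

Lemma mulJcE x : x^* * x = (complex.Re (x^* * x))%:C.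
Proof. by case: x => a b /=; congr (_ +i* _); lra. Qed.

End ComplexScalars.

Section Adjoint.
Variable R : realType.
Local Notation C := R[i].

Lemma adjmxE p q (M : 'M[C]_(p, q)) i j : adjmx M i j = (M j i)^*.
Proof. by rewrite !mxE. Qed.

Lemma adjmxM p q s (M : 'M[C]_(p, q)) (N : 'M[C]_(q, s)) :
  adjmx (M *m N) = adjmx N *m adjmx M.
Proof. by rewrite /adjmx map_mxM trmx_mul. Qed.

Lemma adjmxK p q (M : 'M[C]_(p, q)) : adjmx (adjmx M) = M.
Proof. by apply/matrixP => i j; rewrite !mxE conjcK. Qed.

End Adjoint.

Lemma iota_delta (R : realType) n d (A : 'I_d -> 'M[R[i]]_n) k :
  Defs.iota A (delta_mx 0 k) = A k.
Proof.
rewrite /Defs.iota (bigD1 k) //= big1 => [|j /negbTE jk]; last by rewrite mxE jk andbF scale0r.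
by rewrite mxE !eqxx addr0 scale1r.
Qed.

Lemma abelian_theory_comm (R : realType) n d (A : 'I_d -> 'M[R[i]]_n) :
  abelian_theory A -> forall k l, A k *m A l = A l *m A k.
Proof. by move=> hab k l; have := hab (delta_mx 0 k) (delta_mx 0 l); rewrite !iota_delta. Qed.

Lemma hermitian_codiagonalization (R : realType) n d (A : 'I_d -> 'M[R[i]]_n) :
  (forall k, herm_op (A k)) -> (forall k l, A k *m A l = A l *m A k) ->
  exists (P : 'M[R[i]]_n) (lam : 'I_n -> 'rV[R]_d),
    [/\ P *m adjmx P = 1%:M, adjmx P *m P = 1%:M &
        forall k, P *m A k *m adjmx P = diag_mx (\row_i (lam i 0 k)%:C)].
Proof.
move=> hA hcomm.
(* Simultaneous Schur triangularization; a Hermitian triangular matrix is real diagonal. *)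
have [P Pu /allP Ptrig] : cotrigonalizable_in (@unitarymx R[i] n n) [seq A k | k <- enum 'I_d].
  by apply: cotrigonalization => _ _ /mapP[k _ ->] /mapP[l _ ->]; apply: hcomm.
have PP : P *m adjmx P = 1%:M by rewrite /adjmx map_trmx; apply/unitarymxP.
pose T k := P *m A k *m adjmx P.
have T_herm k : adjmx (T k) = T k by rewrite !adjmxM adjmxK hA mulmxA.
have T_trig k : is_trig_mx (T k).
  have := Ptrig (A k) (map_f _ (mem_enum _ k)).
  by rewrite inE /similar_to /conjmx (pinvmx_unitary Pu) /adjmx -map_trmx.
exists P, (fun i => \row_k complex.Re (T k i i)); split; [done | exact: mulmx1C |].
move=> k; apply/matrixP => i j; rewrite -/(T k) [RHS]mxE [_ 0 i]mxE.
have [<- | neq_ij] := eqVneq i j; last first.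
  rewrite mulr0n; case: (ltngtP i j) => [ij | ji | /val_inj eq_ij].
  - by rewrite (is_trig_mxP (T_trig k)).
  - by rewrite -T_herm mxE [_ j i]mxE (is_trig_mxP (T_trig k)) // conjc0.
  - by rewrite eq_ij eqxx in neq_ij.
have := congr1 (fun M : 'M_n => M i i) (T_herm k); rewrite /= mxE [_ i i]mxE mulr1n mxE.
by case: (T k i i) => a b [] hb; congr (_ +i* _); lra.
Qed.

Lemma sum_neq0 (I : finType) (U : nmodType) (F : I -> U) :
  \sum_i F i != 0 -> exists i, F i != 0.
Proof.
move=> sumF; apply/existsP; apply: contraR sumF; rewrite negb_exists => /forallP F0.
by apply/eqP/big1 => i _; apply/eqP; rewrite -[_ == _]negbK F0.
Qed.

Section RowSpaces.
Variables (F : fieldType) (d : nat).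
Local Notation V := 'rV[F]_d.

Lemma rank_lt_row_notin m p (D : 'M[F]_(m, d)) (M : 'M[F]_(p, d)) :
  (\rank M < \rank D)%N -> exists i, ~~ (row i D <= M)%MS.
Proof.
move=> ltMD; apply/existsP; apply: contraLR ltMD; rewrite negb_exists -leqNgt => /forallP sub.
by apply/mxrankS/row_subP => i; move/negPn: (sub i).
Qed.

Lemma rank_lt_kermx m (Q : 'M[F]_(m, d)) :
  (\rank Q < m)%N -> exists2 x : 'rV_m, x != 0 & x *m Q = 0.
Proof.
move=> ltQ; have /rowV0Pn[x /sub_kermxP xQ x_neq0] : kermx Q != 0.
  by rewrite kermx_eq0 /row_free neq_ltn ltQ.
by exists x.
Qed.

Lemma rank_diffs (L : seq V) m (D : 'M[F]_(m, d)) :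
  (forall i, exists a b, [/\ a \in L, b \in L & row i D = a - b]) ->
  (\rank D <= (size L).-1)%N.
Proof.
move=> hD; pose M := \matrix_(j < (size L).-1) (nth 0 L j.+1 - head 0 L).
have sub_head c : c \in L -> (c - head 0 L <= M)%MS.
  rewrite {}/M; case: L {hD} => [//|x L]; rewrite inE => /predU1P[->|cL] /=.
    by rewrite subrr sub0mx.
  have lt_cL : (index c L < size L)%N by rewrite index_mem.
  by have := row_sub (Ordinal lt_cL) (\matrix_(j < size L) (nth 0 L j - x)); rewrite rowK nth_index.
apply: leq_trans (rank_leq_row M); apply/mxrankS/row_subP => i.
have [a [b [aL bL ->]]] := hD i.
have -> : a - b = (a - head 0 L) - (b - head 0 L) by rewrite opprB addrA subrK.
by rewrite addmx_sub ?eqmx_opp ?sub_head.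
Qed.

End RowSpaces.

Section Caratheodory.
Variables (R : realFieldType) (d : nat) (I : finType).
Local Notation V := 'rV[R]_d.
Implicit Types (l mu : I -> R) (q : I -> V).

Lemma affine_dependence q (S : {pred I}) b (B : 'M[R]_(b, d)) :
  {in S &, forall i j, (q i - q j <= B)%MS} -> ((\rank B).+1 < #|S|)%N ->
  exists mu, [/\ exists i, mu i != 0, \sum_i mu i = 0,
                 \sum_i mu i *: q i = 0 & {subset support mu <= S}].
Proof.
move=> qB ltBS; have /card_gt0P[t0 St0] : (0 < #|S|)%N by apply: leq_ltn_trans ltBS.
set S' := [predD1 S & t0].
have cardS : #|S| = #|S'|.+1 by rewrite (cardD1 t0) St0.
pose e (j : 'I_#|S'|) : I := enum_val j.
have e_neq j : e j != t0 by have := enum_valP j; rewrite inE => /andP[].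
have eS j : e j \in S by have := enum_valP j; rewrite inE => /andP[].
pose Q := \matrix_j (q (e j) - q t0).
have [x x_neq0 xQ] : exists2 x : 'rV_#|S'|, x != 0 & x *m Q = 0.
  apply: rank_lt_kermx; apply: leq_ltn_trans (_ : \rank B < _)%N.
    by apply/mxrankS/row_subP => j; rewrite rowK qB.
  by rewrite -ltnS -cardS.
pose mu i := \sum_j x 0 j * ((e j == i)%:R - (t0 == i)%:R).
have sum_delta (U : lmodType R) a (G : I -> U) : \sum_i (a == i)%:R *: G i = G a.
  rewrite (bigD1 a) //= eqxx scale1r big1 ?addr0 // => i.
  by rewrite eq_sym => /negbTE->; rewrite scale0r.
have sum_mu (U : lmodType R) (G : I -> U) :
    \sum_i mu i *: G i = \sum_j x 0 j *: (G (e j) - G t0).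
  under eq_bigr do rewrite scaler_suml.
  rewrite exchange_big; apply: eq_bigr => j _.
  by under eq_bigr do rewrite -scalerA scalerBl; rewrite -scaler_sumr sumrB !sum_delta.
exists mu; split.
- have /matrix0Pn[i [j xj]] := x_neq0; rewrite (ord1 i) in xj.
  have t0_ej : (t0 == e j) = false by rewrite eq_sym (negbTE (e_neq j)).
  exists (e j); rewrite /mu (bigD1 j) //= eqxx t0_ej subr0 mulr1 big1 ?addr0 // => j' nj'.
  by rewrite subr0 (inj_eq enum_val_inj) (negbTE nj') mulr0.
- have sum_ind a : \sum_i (a == i)%:R = 1 :> R.
    by rewrite (bigD1 a) //= eqxx big1 ?addr0 // => i; rewrite eq_sym => /negbTE->.
  rewrite /mu exchange_big big1 // => j _.
  by rewrite -mulr_sumr sumrB !sum_ind subrr mulr0.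
- by rewrite sum_mu -[RHS]xQ mulmx_sum_row; under [RHS]eq_bigr do rewrite rowK.
- move=> i; rewrite inE; apply: contraR => iNS; rewrite /mu big1 // => j _.
  have neq_i c : c \in S -> (c == i) = false by move=> cS; apply: contraNF iNS => /eqP <-.
  by rewrite !neq_i ?eS // subrr mulr0.
Qed.

Lemma sum0_gt0 mu : \sum_i mu i = 0 -> (exists i, mu i != 0) -> exists i, 0 < mu i.
Proof.
move=> sum0 [i mu_i]; apply/existsP; apply: contraT; rewrite negb_exists => /forallP mu_le0.
have Nmu_ge0 j : true -> 0 <= - mu j by rewrite oppr_ge0 leNgt mu_le0.
move/psumr_eq0P: (Nmu_ge0); rewrite sumrN sum0 oppr0 => /(_ erefl i isT) /eqP.
by rewrite oppr_eq0 (negbTE mu_i).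
Qed.

Lemma caratheodory_step l mu :
  (forall i, 0 <= l i) -> (exists i, 0 < mu i) -> {subset support mu <= support l} ->
  exists t : R, (forall i, 0 <= l i - t * mu i) /\
                support (fun i => l i - t * mu i) \proper support l.
Proof.
move=> l_ge0 [i1 mu_i1] mu_l.
(* [l im / mu im] is the largest step keeping [l - t * mu] nonnegative; it kills [l im]. *)
pose im := [arg min_(i < i1 | 0 < mu i) (l i / mu i)]%O.
have [mu_im im_min] : 0 < mu im /\ forall i, 0 < mu i -> l im / mu im <= l i / mu i.
  by rewrite /im; case: arg_minP => //= i mu_i min_i; split=> // j; apply: min_i.
exists (l im / mu im); split => [i|].
  rewrite subr_ge0; have [mu_i | mu_le0] := ltrP 0 (mu i).
    by rewrite -ler_pdivlMr // im_min.
  exact: le_trans (mulr_ge0_le0 (divr_ge0 (l_ge0 im) (ltW mu_im)) mu_le0) (l_ge0 i).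
apply/properP; split.
  apply/subsetP => i; rewrite !inE; apply: contra_neq => l_i.
  have : i \notin support l by rewrite inE l_i eqxx.
  by move/(contra (mu_l i)); rewrite inE negbK l_i => /eqP->; rewrite mulr0 subrr.
exists im; first by apply: mu_l; rewrite inE gt_eqF.
by rewrite inE divfK ?subrr ?eqxx // gt_eqF.
Qed.

Lemma caratheodory q b (B : 'M[R]_(b, d)) l :
  (forall i, 0 <= l i) -> {in support l &, forall i j, (q i - q j <= B)%MS} ->
  exists l' : I -> R, [/\ forall i, 0 <= l' i, \sum_i l' i = \sum_i l i,
    \sum_i l' i *: q i = \sum_i l i *: q i & (#|support l'| <= (\rank B).+1)%N].
Proof.
have [N] := ubnP #|support l|; elim: N => // N IH in l *; rewrite ltnS => le_lN l_ge0 qB.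
have [le_lB | lt_Bl] := leqP #|support l| (\rank B).+1; first by exists l.
have [mu [mu_neq0 mu_sum mu_q mu_l]] := affine_dependence qB lt_Bl.
have [t [l'_ge0 l'_l]] := caratheodory_step l_ge0 (sum0_gt0 mu_sum mu_neq0) mu_l.
have [|||l'' [l''_ge0 l''_sum l''_q l''_B]] := IH (fun i => l i - t * mu i).
- exact: leq_trans (proper_card l'_l) le_lN.
- exact: l'_ge0.
- by move: l'_l => /properP[/subsetP sub _]; apply: sub_in2 qB.
exists l''; split => //.
  by rewrite l''_sum sumrB -mulr_sumr mu_sum mulr0 subr0.
rewrite l''_q; under eq_bigr do rewrite scalerBl -scalerA.
by rewrite sumrB -scaler_sumr mu_q scaler0 subr0.
Qed.

End Caratheodory.

Section DirectionOn.
Variables (R : realFieldType) (d n : nat) (lam : 'I_n -> 'rV[R]_d).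

Definition dir_on (S : {pred 'I_n}) (w : 'rV[R]_d) : Prop :=
  exists t : 'I_n -> R,
    [/\ \sum_i t i = 0, {subset support t <= S} & w = \sum_i t i *: lam i].

Definition diffmx_on (S : {pred 'I_n}) (i0 : 'I_n) : 'M[R]_(n, d) :=
  \matrix_i ((i \in S)%:R *: (lam i - lam i0)).

Lemma diffmx_on_sub S i0 i j :
  i \in S -> j \in S -> (lam i - lam j <= diffmx_on S i0)%MS.
Proof.
move=> iS jS; have -> : lam i - lam j = (lam i - lam i0) - (lam j - lam i0).
  by rewrite opprB addrA subrK.
have row_S k : k \in S -> row k (diffmx_on S i0) = lam k - lam i0.
  by move=> kS; rewrite rowK kS scale1r.
by rewrite addmx_sub ?eqmx_opp // -?(row_S _ iS) -?(row_S _ jS) row_sub.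
Qed.

Lemma dir_on_diffmx S i0 w : i0 \in S -> dir_on S w <-> (w <= diffmx_on S i0)%MS.
Proof.
move=> S_i0; split => [[t [t_sum tS ->]] | /submxP[y ->]].
  have -> : \sum_i t i *: lam i = \sum_i t i *: (lam i - lam i0).
    by rewrite (eq_bigr _ (fun i _ => scalerBr _ _ _)) sumrB -scaler_suml t_sum scale0r subr0.
  apply: summx_sub => i _; have [-> | /tS iS] := eqVneq (t i) 0.
    by rewrite scale0r sub0mx.
  by apply: scalemx_sub; apply: diffmx_on_sub.
pose s i := y 0 i * (i \in S)%:R.
exists (fun i => s i - (if i == i0 then \sum_j s j else 0)); split.
- by rewrite sumrB -big_mkcond big_pred1_eq subrr.
- move=> i; apply: contraR => iNS.
  have -> : (i == i0) = false by apply: contraNF iNS => /eqP->.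
  by rewrite /s (negbTE iNS) mulr0 subr0.
- rewrite mulmx_sum_row; under eq_bigr do rewrite rowK scalerA scalerBr.
  under [RHS]eq_bigr do rewrite scalerBl (fun_if (fun a => a *: lam _)) scale0r.
  by rewrite !sumrB -[in RHS]big_mkcond big_pred1_eq scaler_suml.
Qed.

Lemma dir_on_sub S S' w : {subset S <= S'} -> dir_on S w -> dir_on S' w.
Proof. by move=> SS' [t [t_sum tS ->]]; exists t; split=> // i /tS /SS'. Qed.

End DirectionOn.

Lemma uniq_extend (T : eqType) (X L : seq T) r :
  uniq L -> (size (undup X) <= r)%N -> (r <= size L)%N ->
  exists Y : seq T, [/\ uniq Y, size Y = r, {subset X <= Y} & {subset Y <= X ++ L}].
Proof.
move=> L_uniq le_Xr le_rL.
pose Z := undup X ++ [seq y <- L | y \notin X].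
have Z_uniq : uniq Z.
  rewrite cat_uniq undup_uniq filter_uniq // andbT.
  by apply/hasPn => y; rewrite mem_filter mem_undup => /andP[].
have LZ : {subset L <= Z} by move=> y yL; rewrite mem_cat mem_undup mem_filter yL andbT orbN.
have le_rZ : (r <= size Z)%N := leq_trans le_rL (uniq_leq_size L_uniq LZ).
exists (take r Z); split.
- exact: take_uniq.
- by rewrite size_take_min (minn_idPl le_rZ).
- by move=> x xX; rewrite /Z take_cat ltnNge le_Xr /= mem_cat mem_undup xX.
- move=> y /mem_take; rewrite !mem_cat mem_undup mem_filter => /orP[-> // | /andP[_ ->]].
  by rewrite orbT.
Qed.

Section ConvexHulls.
Variables (R : realType) (d : nat).
Local Notation V := 'rV[R]_d.

Lemma in_conv_support (S : V -> Prop) k (q : 'I_k -> V) (l : 'I_k -> R) rho :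
  (forall i, 0 <= l i) -> \sum_i l i = 1 -> rho = \sum_i l i *: q i ->
  (forall i, l i != 0 -> S (q i)) -> in_conv S rho.
Proof.
move=> l_ge0 l_sum rho_eq qS.
have [i0 l_i0] : exists i0, l i0 != 0 by apply: sum_neq0; rewrite l_sum oner_neq0.
exists k, (fun i => if l i != 0 then q i else q i0), l; split.
- by move=> i; case: ifPn => [/qS | _]; last apply: qS.
- split=> //; split=> //; rewrite rho_eq; apply: eq_bigr => i _.
  by case: ifPn => // /negPn/eqP->; rewrite !scale0r.
Qed.

Lemma conv_distinct_points (S : V -> Prop) (L : seq V) r k (q : 'I_k -> V) (l : 'I_k -> R) rho :
  uniq L -> (forall x, x \in L -> S x) -> (r <= size L)%N -> (forall i, S (q i)) ->
  (forall i, 0 <= l i) -> \sum_i l i = 1 -> rho = \sum_i l i *: q i ->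
  (#|support l| <= r)%N ->
  exists s : 'I_r -> V,
    injective s /\ (forall j, S (s j)) /\ in_conv (fun x => exists j, x = s j) rho.
Proof.
move=> L_uniq LS le_rL qS l_ge0 l_sum rho_eq le_lr.
pose X := [seq q i | i <- enum (support l)].
have le_Xr : (size (undup X) <= r)%N.
  by rewrite (leq_trans (size_undup X)) // size_map -cardE.
have [Y [Y_uniq Y_size XY YXL]] := uniq_extend L_uniq le_Xr le_rL.
pose s (j : 'I_r) := nth 0 Y j.
exists s; split; [|split].
- by move=> j j' /eqP; rewrite /s nth_uniq ?Y_size // => /eqP/val_inj.
- move=> j; have /YXL : s j \in Y by rewrite mem_nth ?Y_size.
  by rewrite mem_cat => /orP[/mapP[i _ ->] | /LS].
- apply: (in_conv_support l_ge0 l_sum rho_eq) => i l_i.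
  have /XY qY : q i \in X by apply: map_f; rewrite mem_enum.
  have lt_Y : (index (q i) Y < r)%N by rewrite -Y_size index_mem.
  by exists (Ordinal lt_Y); rewrite /s nth_index.
Qed.

Lemma in_conv_regroup n (lam : 'I_n -> V) (S : V -> Prop) rho :
  (forall x, S x -> exists i, lam i = x) -> in_conv S rho ->
  exists l : 'I_n -> R, [/\ forall i, 0 <= l i, \sum_i l i = 1,
    rho = \sum_i l i *: lam i & forall i, l i != 0 -> S (lam i)].
Proof.
move=> S_lam [m [w [c [wS [c_ge0 [c_sum ->]]]]]].
have [g g_w] := fin_all_exists (fun j => S_lam (w j) (wS j)).
exists (fun i => \sum_(j | g j == i) c j); split.
- by move=> i; apply: sumr_ge0 => j _; apply: c_ge0.
- by rewrite -c_sum (partition_big g predT).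
- rewrite (partition_big g predT) //; apply: eq_bigr => i _.
  by rewrite scaler_suml; apply: eq_bigr => j /eqP <-; rewrite g_w.
- move=> i; have [j /eqP gj _ | none] := pickP (fun j => g j == i).
    by rewrite -gj g_w.
  by rewrite big_pred0 ?eqxx.
Qed.

End ConvexHulls.

Lemma pairing_delta (R : realType) d (a : 'rV[R]_d) k : pairing a (delta_mx 0 k) = a 0 k.
Proof.
rewrite /pairing (bigD1 k) //= big1 => [|j /negbTE jk]; last by rewrite mxE jk andbF mulr0.
by rewrite mxE !eqxx mulr1 addr0.
Qed.

Lemma aff_dir_sub_maxrank (R : realType) n d (A : 'I_d -> 'M[R[i]]_n) r m (B : 'M[R]_(m, d)) :
  conv_dim A r -> diff_family A B -> \rank B = r -> forall w, aff_dir A w -> (w <= B)%MS.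
Proof.
move=> [_ max_r] B_diff rB.
have diff_sub a b : weight A a -> weight A b -> (a - b <= B)%MS.
  move=> wa wb; have aB_diff : diff_family A (col_mx B (a - b)).
    move=> i; case: (split_ordP i) => j ->; first by rewrite rowKu; apply: B_diff.
    by rewrite rowKd row_id; exists a, b.
  have B_sub : (B <= col_mx B (a - b))%MS by rewrite -addsmxE addsmxSl.
  suff : (col_mx B (a - b) <= B)%MS by rewrite col_mx_sub => /andP[].
  by rewrite -(mxrank_leqif_sup B_sub).2 eqn_leq mxrankS //= rB max_r.
by move=> w [k [a [b [c [wa [wb ->]]]]]]; apply: summx_sub => i _; apply/scalemx_sub/diff_sub.
Qed.


Section Coordinates.
Variables (R : realType) (n d : nat) (A : 'I_d -> 'M[R[i]]_n).
Variables (P : 'M[R[i]]_n) (lam : 'I_n -> 'rV[R]_d).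
Hypotheses (P_unitary : P *m adjmx P = 1%:M) (P_unitary' : adjmx P *m P = 1%:M).
Hypothesis A_diag : forall k, P *m A k *m adjmx P = diag_mx (\row_i (lam i 0 k)%:C).

Definition eigcoord (x : 'cV[R[i]]_n) (i : 'I_n) : R[i] := (P *m x) i 0.

Lemma eigcoord_adj (b : 'cV[R[i]]_n) i : eigcoord (adjmx P *m b) i = b i 0.
Proof. by rewrite /eigcoord mulmxA P_unitary mul1mx. Qed.

Lemma eigcoord_A k x i : eigcoord (A k *m x) i = (lam i 0 k)%:C * eigcoord x i.
Proof.
rewrite /eigcoord; have -> : P *m (A k *m x) = diag_mx (\row_i (lam i 0 k)%:C) *m (P *m x).
  by rewrite -A_diag -!mulmxA (mulmxA (adjmx P)) P_unitary' mul1mx.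
by rewrite mul_diag_mx !mxE.
Qed.

Lemma inner_eigcoord x y : inner x y = \sum_i (eigcoord x i)^* * eigcoord y i.
Proof.
rewrite /inner; have -> : adjmx x *m y = adjmx (P *m x) *m (P *m y).
  by rewrite adjmxM -mulmxA (mulmxA (adjmx P)) P_unitary' mul1mx.
by rewrite mxE; apply: eq_bigr => i _; rewrite adjmxE.
Qed.

Lemma istar_eigcoord psi :
  istar A psi = \sum_i complex.Re ((eigcoord psi i)^* * eigcoord psi i) *: lam i.
Proof.
apply/rowP => k; rewrite !mxE inner_eigcoord Re_sum summxE; apply: eq_bigr => i _.
by rewrite eigcoord_A mulrCA Re_realM [RHS]mxE mulrC.
Qed.

Lemma distar_eigcoord psi phi :
  distar A psi phi = \sum_i (2 * complex.Re ((eigcoord psi i)^* * eigcoord phi i)) *: lam i.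
Proof.
apply/rowP => k; rewrite mxE !inner_eigcoord ReD !Re_sum -big_split summxE.
apply: eq_bigr => i _; rewrite /= !eigcoord_A !(mulrCA _ (lam i 0 k)%:C) !Re_realM ReJ_mulC.
by rewrite [RHS]mxE; ring.
Qed.

Lemma eigcoord_inj x y : (forall i, eigcoord x i = eigcoord y i) -> x = y.
Proof.
move=> xy; rewrite -[x]mul1mx -[y]mul1mx -P_unitary' -!mulmxA; congr (_ *m _).
by apply/matrixP => i j; rewrite (ord1 j); apply: xy.
Qed.

Lemma eigcoord_iota v x j :
  eigcoord (Defs.iota A v *m x) j = (pairing (lam j) v)%:C * eigcoord x j.
Proof.
rewrite /eigcoord /Defs.iota mulmx_suml mulmx_sumr summxE /pairing rmorph_sum mulr_suml.
apply: eq_bigr => k _; rewrite -scalemxAl -scalemxAr mxE -/(eigcoord (A k *m x) j) eigcoord_A.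
by rewrite rmorphM mulrCA mulrA.
Qed.

Lemma weightP a : weight A a <-> exists i, lam i = a.
Proof.
split=> [[x [x_neq0 x_eig]] | [i <-]].
  have [i cx_i] : exists i, eigcoord x i != 0.
    apply/existsP; apply: contraR x_neq0; rewrite negb_exists => /forallP cx0.
    by apply/eqP/eigcoord_inj => i; rewrite (eqP (negPn (cx0 i))) /eigcoord mulmx0 mxE.
  exists i; apply/rowP => k; apply/complexI/(mulIf cx_i).
  rewrite -[lam i 0 k](pairing_delta (lam i)) -eigcoord_iota x_eig /eigcoord -scalemxAr mxE.
  by rewrite pairing_delta.
exists (adjmx P *m delta_mx i 0); split.
  apply/negP => /eqP e0; have := eigcoord_adj (delta_mx i 0) i.
  by rewrite e0 /eigcoord mulmx0 !mxE !eqxx => /eqP; rewrite eq_sym oner_eq0.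
move=> v; apply: eigcoord_inj => j; rewrite eigcoord_iota {2}/eigcoord -scalemxAr mxE.
rewrite -/(eigcoord (adjmx P *m delta_mx i 0) j) eigcoord_adj mxE.
by have [-> | ] := eqVneq j i; rewrite ?mulr0.
Qed.

Lemma lam_weight i : weight A (lam i).
Proof. by apply/weightP; exists i. Qed.

Lemma distar_dir_on psi phi : complex.Re (inner psi phi) = 0 ->
  dir_on lam (support (eigcoord psi)) (distar A psi phi).
Proof.
move=> tangent; exists (fun i => 2 * complex.Re ((eigcoord psi i)^* * eigcoord phi i)); split.
- by rewrite -mulr_sumr -Re_sum -inner_eigcoord tangent mulr0.
- by move=> i; rewrite !inE; apply: contra_neq => ->; rewrite raddf0 mul0r mulr0.
- exact: distar_eigcoord.
Qed.

Lemma dir_on_distar psi w : dir_on lam (support (eigcoord psi)) w ->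
  exists phi, complex.Re (inner psi phi) = 0 /\ distar A psi phi = w.
Proof.
move=> [t [t_sum t_supp ->]].
(* Where [eigcoord psi i = 0] the division yields [0], which is harmless as [t i = 0] there. *)
pose phi := adjmx P *m \col_i ((t i / 2)%:C / (eigcoord psi i)^*).
have Re_phi i : complex.Re ((eigcoord psi i)^* * eigcoord phi i) = t i / 2.
  rewrite eigcoord_adj mxE; have [c0 | c_neq0] := eqVneq (eigcoord psi i) 0; last first.
    by rewrite mulrC divfK ?conjc_eq0.
  have /eqP-> : t i == 0 by apply/negPn/negP => /t_supp; rewrite inE c0 eqxx.
  by rewrite !(mul0r, mulr0, rmorph0).
exists phi; split.
  rewrite inner_eigcoord Re_sum; under eq_bigr do rewrite Re_phi.
  by rewrite -mulr_suml t_sum mul0r.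
rewrite distar_eigcoord; apply: eq_bigr => i _.
by rewrite Re_phi mulrC divfK // pnatr_eq0.
Qed.

Definition degenerate_on (S : {pred 'I_n}) : Prop :=
  exists2 w, aff_dir A w & ~ dir_on lam S w.

Lemma critical_valueE rho : critical_value A rho <->
  exists l : 'I_n -> R, [/\ forall i, 0 <= l i, \sum_i l i = 1,
    rho = \sum_i l i *: lam i & degenerate_on (support l)].
Proof.
split=> [[psi [psi_unit [psi_rho [w [w_aff w_notin]]]]] |
         [l [l_ge0 l_sum rho_eq [w w_aff w_notin]]]].
  pose l i := complex.Re ((eigcoord psi i)^* * eigcoord psi i).
  have supp_l : {subset support l <= support (eigcoord psi)}.
    by move=> i; rewrite !inE ReJ_mul_eq0.
  exists l; split.
  - by move=> i; apply: ReJ_mul_ge0.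
  - by rewrite -Re_sum -inner_eigcoord psi_unit.
  - by rewrite -psi_rho istar_eigcoord.
  - exists w => // /(dir_on_sub supp_l)/dir_on_distar[phi [tangent phi_w]].
    exact: w_notin phi tangent phi_w.
pose psi := adjmx P *m \col_i (Num.sqrt (l i))%:C.
have c_psi i : eigcoord psi i = (Num.sqrt (l i))%:C by rewrite eigcoord_adj mxE.
have norm_psi i : (eigcoord psi i)^* * eigcoord psi i = (l i)%:C.
  by rewrite c_psi mulJcE /= mulr0 subr0 -expr2 sqr_sqrtr.
exists psi; split; [|split].
- rewrite inner_eigcoord; under eq_bigr do rewrite norm_psi.
  by rewrite -rmorph_sum l_sum.
- by rewrite istar_eigcoord rho_eq; apply: eq_bigr => i _; rewrite norm_psi.
- exists w; split => // phi tangent phi_w; apply: w_notin; rewrite -phi_w.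
  apply: dir_on_sub (distar_dir_on tangent) => i; rewrite !inE c_psi.
  by apply: contra_neq => ->; rewrite sqrtr0.
Qed.

Lemma conv_dim_le_distinct r :
  conv_dim A r -> (r <= size (undup [seq lam i | i <- enum 'I_n]))%N.
Proof.
move=> [[m [D [D_diff <-]]] _]; apply: leq_trans (rank_diffs _) (leq_pred _) => i.
have [a [b [/weightP[ia <-] [/weightP[ib <-] ->]]]] := D_diff i.
by exists (lam ia), (lam ib); rewrite !mem_undup !map_f ?mem_enum.
Qed.

Lemma conv_few_of_degenerate r rho (l : 'I_n -> R) :
  conv_dim A r -> (forall i, 0 <= l i) -> \sum_i l i = 1 -> rho = \sum_i l i *: lam i ->
  degenerate_on (support l) ->
  exists s : 'I_r -> 'rV[R]_d,
    injective s /\ (forall j, weight A (s j)) /\ in_conv (fun x => exists j, x = s j) rho.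
Proof.
move=> hr l_ge0 l_sum rho_eq [w w_aff w_notin].
have [i0 l_i0] : exists i0, l i0 != 0 by apply: sum_neq0; rewrite l_sum oner_neq0.
pose B := diffmx_on lam (support l) i0.
have B_diff : diff_family A B.
  move=> i; rewrite rowK; case: (i \in support l); rewrite ?scale1r ?scale0r.
    by exists (lam i), (lam i0); split; [|split] => //; apply: lam_weight.
  by exists (lam i0), (lam i0); rewrite subrr; split; [|split] => //; apply: lam_weight.
have lt_Br : (\rank B < r)%N.
  rewrite ltn_neqAle hr.2 ?andbT //; apply/eqP => rB; apply: w_notin.
  exact/(dir_on_diffmx _ _ l_i0)/(aff_dir_sub_maxrank hr B_diff rB).
have [l' [l'_ge0 l'_sum l'_rho l'_B]] :=
  caratheodory l_ge0 (fun i j iS jS => diffmx_on_sub lam i0 iS jS).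
apply: (conv_distinct_points (undup_uniq [seq lam i | i <- enum 'I_n])) l'_ge0 _ _ _.
- by move=> x; rewrite mem_undup => /mapP[i _ ->]; apply: lam_weight.
- exact: conv_dim_le_distinct.
- exact: lam_weight.
- by rewrite l'_sum.
- by rewrite l'_rho.
- exact: leq_trans l'_B lt_Br.
Qed.

Lemma degenerate_of_conv_few r rho (s : 'I_r -> 'rV[R]_d) :
  conv_dim A r -> (forall j, weight A (s j)) -> in_conv (fun x => exists j, x = s j) rho ->
  exists l : 'I_n -> R, [/\ forall i, 0 <= l i, \sum_i l i = 1,
    rho = \sum_i l i *: lam i & degenerate_on (support l)].
Proof.
move=> [[m [D [D_diff rD]]] _] s_w rho_conv.
have s_lam x : (exists j, x = s j) -> exists i, lam i = x by move=> [j ->]; apply/weightP.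
have [l [l_ge0 l_sum rho_eq l_s]] := in_conv_regroup s_lam rho_conv.
exists l; split => //.
have [i0 l_i0] : exists i0, l i0 != 0 by apply: sum_neq0; rewrite l_sum oner_neq0.
have [j0 s_j0] := l_s i0 l_i0.
pose M := diffmx_on lam (support l) i0.
have lt_MD : (\rank M < \rank D)%N.
  apply: leq_ltn_trans (_ : \rank M <= (size [seq s j | j <- enum 'I_r]).-1)%N _.
    apply: rank_diffs => i; rewrite rowK; have s_in j : s j \in [seq s j | j <- enum 'I_r].
      by rewrite map_f ?mem_enum.
    have [iS | iNS] := boolP (i \in support l); rewrite ?scale1r ?scale0r.
      by have [j ->] := l_s i iS; rewrite s_j0; exists (s j), (s j0); rewrite !s_in.
    by exists (s j0), (s j0); rewrite !subrr !s_in.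
  by rewrite size_map size_enum_ord rD ltn_predL (leq_ltn_trans (leq0n _) (ltn_ord j0)).
have [i /negP Di_notin] := rank_lt_row_notin lt_MD.
have [a [b [wa [wb Di]]]] := D_diff i.
exists (row i D).
  exists 1%N, (fun=> a), (fun=> b), (fun=> 1); split => //; split => //.
  by rewrite big_ord1 scale1r.
by move/(dir_on_diffmx _ _ l_i0).
Qed.

End Coordinates.

Local Close Scope complex_scope.

Theorem proposition4p16 (R : realType) (n d : nat)
  (A : 'I_d -> 'M[R[i]]_n) (W : 'M[R[i]]_n)
  (hA : forall k, herm_op (A k)) (hW : herm_op W)
  (hab : abelian_theory A)
  (r : nat) (hr : conv_dim A r)
  (rho : 'rV[R]_d) (hrho : in_conv (weight A) rho) :
  critical_value A rho <->
  exists s : 'I_r -> 'rV[R]_d,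
    injective s /\ (forall j, weight A (s j)) /\
    in_conv (fun x => exists j, x = s j) rho.
Proof.
have [P [lam [P_unitary P_unitary' A_diag]]] :=
  hermitian_codiagonalization hA (abelian_theory_comm hab).
rewrite (critical_valueE P_unitary P_unitary' A_diag); split.
  move=> [l [l_ge0 l_sum rho_eq l_deg]].
  exact (conv_few_of_degenerate P_unitary P_unitary' A_diag hr l_ge0 l_sum rho_eq l_deg).
move=> [s [_ [s_w rho_conv]]].
exact (degenerate_of_conv_few P_unitary P_unitary' A_diag hr s_w rho_conv).
Qed.
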